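(* Let $\boldsymbol{A},\boldsymbol{B},\boldsymbol{C}\in\mathbb{R}^2$ be three pairwise distinct points carrying scalar vorticities $\omega_A,\omega_B,\omega_C\in\mathbb{R}$. Define the effect of $\boldsymbol{A}$'s action on $\boldsymbol{B}$ on the interaction energy between $\boldsymbol{B}$ and $\boldsymbol{C}$ as \[D(\boldsymbol{A},\boldsymbol{B},\boldsymbol{C})=\nabla_{\boldsymbol{B}}\Big(\tfrac{1}{4\pi}\,\omega_B\,\omega_C\log\|\boldsymbol{B}-\boldsymbol{C}\|\Big)\cdot \boldsymbol{u}_{\boldsymbol{A}}(\boldsymbol{B}),\qquad \boldsymbol{u}_{\boldsymbol{A}}(\boldsymbol{B})=\frac{\omega_A}{2\pi}\,\frac{(\boldsymbol{B}-\boldsymbol{A})^{\perp}}{\|\boldsymbol{B}-\boldsymbol{A}\|^2},\] where $(x,y)^\perp=(-y,x)$, and the gradient is taken with respect to the position $\boldsymbol{B}$ with $\omega_B,\omega_C,\boldsymbol{C}$ held fixed. Then \[D(\boldsymbol{A},\boldsymbol{B},\boldsymbol{C})=-\,D(\boldsymbol{C},\boldsymbol{B},\boldsymbol{A}),\] i.e. $\boldsymbol{A}$'s action on $\boldsymbol{B}$ changes the interaction energy between $\boldsymbol{B}$ and $\boldsymbol{C}$ exactly oppositely to how $\boldsymbol{C}$'s action on $\boldsymbol{B}$ changes the interaction energy between $\boldsymbol{A}$ and $\boldsymbol{B}$.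
   Context: Setting: the 2-dimensional incompressible Euler equations in vorticity form, where the (scalar) vorticity is transported by the fluid (in coordinates advecting with the fluid, the vorticity of a fluid particle is constant and only its position changes), and velocity is obtained from vorticity by the 2D Biot–Savart law, so that the velocity induced at $\boldsymbol{B}$ by vorticity $\omega_A$ located at $\boldsymbol{A}$ is $\boldsymbol{u}_{\boldsymbol{A}}(\boldsymbol{B})$ as given. The 2D interaction energy between vortices $\omega(\boldsymbol{y})$ at $\boldsymbol{y}$ and $\omega(\boldsymbol{z})$ at $\boldsymbol{z}$ is $I_{2d}=\frac{1}{4\pi}\omega(\boldsymbol{y})\omega(\boldsymbol{z})\log\|\boldsymbol{z}-\boldsymbol{y}\|$. *)

From Stdlib Require Import Reals.
From Coquelicot Require Import Coquelicot.
Open Scope R_scope.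

Definition pt := (R * R)%type.

Definition vsub (p q : pt) : pt := (fst p - fst q, snd p - snd q).
Definition vscale (a : R) (p : pt) : pt := (a * fst p, a * snd p).
Definition dot (p q : pt) : R := fst p * fst q + snd p * snd q.
Definition perp (p : pt) : pt := (- snd p, fst p).
Definition enorm (p : pt) : R := sqrt (fst p ^ 2 + snd p ^ 2).

Definition grad (f : pt -> R) (p : pt) : pt :=
  (Derive (fun x => f (x, snd p)) (fst p),
   Derive (fun y => f (fst p, y)) (snd p)).

Definition uvel (wA : R) (A B : pt) : pt :=
  vscale (wA / (2 * PI) / (enorm (vsub B A)) ^ 2) (perp (vsub B A)).

Definition Deff (wA wB wC : R) (A B C : pt) : R :=
  dot (grad (fun b => 1 / (4 * PI) * wB * wC * ln (enorm (vsub b C))) B)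
      (uvel wA A B).

(* Both factors of D(A,B,C) are explicit: the gradient of log ||B - C|| is
   (B - C)/||B - C||^2 and u_A(B) is a multiple of (B - A)^perp/||B - A||^2.
   Hence D(A,B,C) and D(C,B,A) share the scalar factor
   wA wB wC / (8 pi^2 ||B - A||^2 ||B - C||^2), multiplied respectively by
   (B - C).(B - A)^perp and (B - A).(B - C)^perp, which are opposite because
   p.q^perp is the (antisymmetric) cross product of q and p. *)
From Stdlib Require Import Reals Lra.
From Coquelicot Require Import Coquelicot.
Open Scope R_scope.

Lemma dot_vscalel (a : R) (p q : pt) : dot (vscale a p) q = a * dot p q.
Proof. unfold dot, vscale; simpl; ring. Qed.

Lemma dot_vscaler (a : R) (p q : pt) : dot p (vscale a q) = a * dot p q.
Proof. unfold dot, vscale; simpl; ring. Qed.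

Lemma dot_perpC (p q : pt) : dot p (perp q) = - dot q (perp p).
Proof. unfold dot, perp; simpl; ring. Qed.

Lemma enorm_vsub_sqr (p q : pt) :
  enorm (vsub p q) ^ 2 = (fst p - fst q) ^ 2 + (snd p - snd q) ^ 2.
Proof.
  unfold enorm, vsub; simpl.
  apply pow2_sqrt, Rplus_le_le_0_compat; apply pow2_ge_0.
Qed.

Lemma sqr_dist_gt0 (p q : pt) :
  p <> q -> 0 < (fst p - fst q) ^ 2 + (snd p - snd q) ^ 2.
Proof.
  destruct p as [p1 p2], q as [q1 q2]; simpl; intros Hpq.
  apply Rnot_le_lt; intros Hle.
  pose proof (pow2_ge_0 (p1 - q1)); pose proof (pow2_ge_0 (p2 - q2)).
  destruct (Rplus_sqr_eq_0 (p1 - q1) (p2 - q2)) as [H1 H2].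
  { unfold Rsqr; nra. }
  apply Hpq; f_equal; lra.
Qed.

Lemma is_derive_ln_sqrt (f : R -> R) (x df : R) :
  0 < f x -> is_derive f x df ->
  is_derive (fun t => ln (sqrt (f t))) x (df / (2 * f x)).
Proof.
  intros Hfx Hf.
  assert (Hs : 0 < sqrt (f x)) by now apply sqrt_lt_R0.
  replace (df / (2 * f x)) with (scal (df / (2 * sqrt (f x))) (/ sqrt (f x))).
  - apply (is_derive_comp ln (fun t => sqrt (f t))).
    + now apply is_derive_ln.
    + now apply is_derive_sqrt.
  - rewrite <- (sqrt_sqrt (f x)) at 3 by lra.
    unfold scal; simpl; unfold mult; simpl; field; lra.
Qed.

Lemma is_derive_ln_sqrt_sqr_shift (c e x : R) :
  0 < (x - c) ^ 2 + e ->
  is_derive (fun t => ln (sqrt ((t - c) ^ 2 + e))) x ((x - c) / ((x - c) ^ 2 + e)).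
Proof.
  intros Hpos.
  replace ((x - c) / ((x - c) ^ 2 + e)) with (2 * (x - c) / (2 * ((x - c) ^ 2 + e)))
    by (field; lra).
  apply (is_derive_ln_sqrt (fun t => (t - c) ^ 2 + e)); [exact Hpos |].
  auto_derive; [exact I | ring].
Qed.

Lemma grad_ln_enorm_vsub (K : R) (c p : pt) : p <> c ->
  grad (fun b => K * ln (enorm (vsub b c))) p
  = vscale (K / enorm (vsub p c) ^ 2) (vsub p c).
Proof.
  intros Hpc.
  pose proof (sqr_dist_gt0 p c Hpc) as Hpos.
  rewrite enorm_vsub_sqr.
  destruct p as [p1 p2], c as [c1 c2]; cbn [fst snd] in *.
  unfold grad, vscale, vsub, enorm; cbn [fst snd].
  f_equal; apply is_derive_unique.
  - replace (K / ((p1 - c1) ^ 2 + (p2 - c2) ^ 2) * (p1 - c1))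
      with (scal K ((p1 - c1) / ((p1 - c1) ^ 2 + (p2 - c2) ^ 2)))
      by (unfold scal; simpl; unfold mult; simpl; field; lra).
    apply (is_derive_scal (fun t => ln (sqrt ((t - c1) ^ 2 + (p2 - c2) ^ 2)))).
    now apply is_derive_ln_sqrt_sqr_shift.
  - apply (is_derive_ext (fun t => K * ln (sqrt ((t - c2) ^ 2 + (p1 - c1) ^ 2)))).
    { intros t; now rewrite Rplus_comm. }
    replace (K / ((p1 - c1) ^ 2 + (p2 - c2) ^ 2) * (p2 - c2))
      with (scal K ((p2 - c2) / ((p2 - c2) ^ 2 + (p1 - c1) ^ 2)))
      by (unfold scal; simpl; unfold mult; simpl; field; lra).
    apply (is_derive_scal (fun t => ln (sqrt ((t - c2) ^ 2 + (p1 - c1) ^ 2)))).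
    apply is_derive_ln_sqrt_sqr_shift; lra.
Qed.

Lemma Deff_explicit (wA wB wC : R) (A B C : pt) : B <> C ->
  Deff wA wB wC A B C
  = 1 / (4 * PI) * wB * wC / enorm (vsub B C) ^ 2
    * (wA / (2 * PI) / enorm (vsub B A) ^ 2)
    * dot (vsub B C) (perp (vsub B A)).
Proof.
  intros HBC.
  unfold Deff, uvel.
  rewrite grad_ln_enorm_vsub by exact HBC.
  rewrite dot_vscalel, dot_vscaler; ring.
Qed.

Theorem proposition1 (A B C : pt) (wA wB wC : R) :
  A <> B -> B <> C -> A <> C ->
  Deff wA wB wC A B C = - Deff wC wB wA C B A.
Proof.
  intros HAB HBC _.
  rewrite (Deff_explicit wA wB wC A B C HBC).
  rewrite (Deff_explicit wC wB wA C B A (not_eq_sym HAB)).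
  rewrite (dot_perpC (vsub B C)).
  unfold Rdiv; ring.
Qed.
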